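(* Let $X$ be a closed subset of a closed symplectic manifold $(M,\omega)$ and $a$ an idempotent of $QH_\ast(M,\omega)$. If $\bar U$ is $a$-superheavy for every open neighborhood $U$ of $X$, then $X$ is $a$-superheavy.
   Context: $c(a,H)$ is Oh's spectral invariant on $QH_\ast(M,\omega)\times C^\infty(M\times[0,1])$; for an idempotent $a$ and $H\in C^\infty(M)$, $\zeta_a(H)=\lim_{l\to\infty}c(a,lH)/l$. A closed set $Y\subset M$ is $a$-superheavy if $\zeta_a(H)\le\sup_Y H$ for all $H\in C^\infty(M)$. *)

From HB Require Import structures.
From mathcomp Require Import all_boot all_order all_algebra.
From mathcomp Require Import all_classical all_reals all_analysis.
Set Implicit Arguments. Unset Strict Implicit. Unset Printing Implicit Defensive.
Import Order.TTheory GRing.Theory Num.Theory.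
Import numFieldTopology.Exports numFieldNormedType.Exports.
Local Open Scope classical_set_scope.
Local Open Scope ring_scope.

(* Abstract superheaviness: [Smooth] is the class of admissible
   Hamiltonians (smooth functions M -> R), [zeta] plays the role of the
   asymptotic spectral invariant zeta_a.  A closed set Y is superheavy if
   zeta H <= sup_Y H for every admissible H (sup in the extended reals,
   so sup over the empty set is -oo). *)
Definition superheavy (R : realType) (M : topologicalType)
  (Smooth : set (M -> R)) (zeta : (M -> R) -> R) (Y : set M) : Prop :=
  forall H : M -> R, Smooth H ->
    ((zeta H)%:E <= ereal_sup [set (H x)%:E | x in Y])%E.

(* Given a level r above sup_X H, the sublevel set {H < r} is an open
   neighbourhood of X, so zeta H is bounded by the sup of H over its closure,
   which by continuity of H lies in {H <= r}.  Hence zeta H <= r for every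
   real r > sup_X H, which forces zeta H <= sup_X H (also when X is empty,
   i.e. sup_X H = -oo). *)

From HB Require Import structures.
From mathcomp Require Import all_boot all_order all_algebra.
From mathcomp Require Import all_classical all_reals all_analysis.
Import numFieldTopology.Exports numFieldNormedType.Exports.
Local Open Scope classical_set_scope.
Local Open Scope ring_scope.
Import Order.TTheory GRing.Theory Num.Theory.

Lemma lee_fin_ubP (R : realType) (x s : \bar R) :
  (forall r : R, (s < r%:E)%E -> (x <= r%:E)%E) -> (x <= s)%E.
Proof.
move: s => [s| |] ub; last 1 first.
- move: x ub => [x| |] ub; last exact: leNye.
  + by have := ub (x - 1) (ltNyr _); rewrite lee_fin leNgt ltrBlDr ltrDl ltr01.
  + by have := ub 0 (ltNyr _).
- apply/lee_addgt0Pr => e e0; apply: ub.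
  by rewrite lte_fin ltrDl.
- exact: leey.
Qed.

Lemma closure_sublevel_lt (R : realType) (M : topologicalType) (H : M -> R)
  (r : R) : continuous H ->
  closure (H @^-1` [set y | y < r]) `<=` H @^-1` [set y | y <= r].
Proof.
move=> cH; have cle : closed (H @^-1` [set y | y <= r]).
  by apply: preimage_closed; [move=> x _; exact: cH | exact: closed_le].
rewrite [X in _ `<=` X](closure_id _).1 //; apply: closureS => x /=; exact: ltW.
Qed.

Theorem lemma4p10 (R : realType) (M : topologicalType)
  (Smooth : set (M -> R)) (zeta : (M -> R) -> R) (X : set M) :
  compact [set: M] ->
  (forall H, Smooth H -> continuous H) ->
  closed X ->
  (forall U : set M, open U -> X `<=` U ->
     superheavy Smooth zeta (closure U)) ->
  superheavy Smooth zeta X.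
Proof.
move=> _ smooth_cont _ shU H sH; apply: lee_fin_ubP => r supXr.
pose U := H @^-1` [set y | y < r].
have oU : open U.
  by apply: open_comp; [move=> x _; exact: smooth_cont | exact: open_lt].
have XU : X `<=` U.
  move=> x Xx; rewrite /U /= -lte_fin; apply: le_lt_trans supXr.
  by apply: ereal_sup_ubound; exists x.
apply: le_trans (shU U oU XU H sH) _.
apply: ge_ereal_sup => _ [x Ux <-]; rewrite lee_fin.
exact: closure_sublevel_lt (smooth_cont H sH) _ Ux.
Qed.
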